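(* Let $k$ be a field, $(X,\leq)$ a locally finite preordered set and $C=IC(X)$. For any $v\in X$, $S_v^*\simeq S'_v$ as right $C^*$-modules.
   Context: $(X,\leq)$ is a reflexive transitive relation with all intervals $[x,y]$ finite. $IC(X)$ has $k$-basis $\{e_{x,y}\mid x\leq y\}$, $\Delta(e_{x,y})=\sum_{x\leq z\leq y}e_{x,z}\otimes e_{z,y}$, $\varepsilon(e_{x,y})=\delta_{x,y}$. $x\sim y$ means $x\leq y$ and $y\leq x$. For $v\in X$ with $\sim$-class $\mathcal C$: $S_v=\sum_{y\in\mathcal C}k e_{v,y}$ (a simple right $C$-subcomodule of $C$) and $S'_v=\sum_{y\in\mathcal C}k e_{y,v}$ (a simple left $C$-subcomodule of $C$). $C^*$ is the dual algebra with convolution product $(fg)(c)=\sum f(c_1)g(c_2)$; $C$ is a left $C^*$-module via $c^*\rightharpoonup c=\sum c_1c^*(c_2)$ and a right $C^*$-module via $c\leftharpoonup c^*=\sum c^*(c_1)c_2$. $S_v$ is a left $C^*$-submodule, so $S_v^*$ is a right $C^*$-module via $(f\leftharpoonup c^* )(s)=f(c^*\rightharpoonup s)$; $S'_v$ is a right $C^*$-submodule of $C$. *)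

From HB Require Import structures.
From mathcomp Require Import all_boot all_order all_algebra.
Set Implicit Arguments. Unset Strict Implicit. Unset Printing Implicit Defensive.
Import GRing.Theory.
Local Open Scope ring_scope.

(* A locally finite preordered set (X, <=): reflexive, transitive relation
   with every interval [x,y] = {z | x <= z <= y} finite; the finiteness is
   witnessed by a duplicate-free enumeration [itv x y] of the interval. *)
Record lfpreorder (X : choiceType) := LFPreorder {
  le : rel X;
  le_refl : reflexive le;
  le_trans : transitive le;
  itv : X -> X -> seq X;
  itv_uniq : forall x y, uniq (itv x y);
  mem_itv : forall x y z, (z \in itv x y) = le x z && le z y }.

Section Incidence.
Variables (k : fieldType) (X : choiceType) (P : lfpreorder X).

Definition simP (x y : X) := le P x y && le P y x.

(* The ~-class of v is exactly the interval [v,v]. *)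
Definition cls (v : X) : seq X := itv P v v.
Definition clsT (v : X) := seq_sub (cls v).

(* Elements of C = IC(X) are represented by their coefficient function
   (a b) |-> coefficient of e_{a,b}.  An element c* of C-dual is determined by
   its values on the basis: (x,y) |-> c*(e_{x,y}) (values on pairs with
   not x <= y are never used). *)
Definition coefC := X -> X -> k.
Definition dualC := X -> X -> k.

Definition e (x y : X) : coefC := fun a b => ((a == x) && (b == y))%:R.

(* c* -> e_{x,y} = sum_{x<=z<=y} e_{x,z} c*(e_{z,y}) *)
Definition lact (c : dualC) (x y : X) : coefC :=
  fun a b => \sum_(z <- itv P x y) c z y * e x z a b.
(* e_{x,y} <- c* = sum_{x<=z<=y} c*(e_{x,z}) e_{z,y} *)
Definition ract (c : dualC) (x y : X) : coefC :=
  fun a b => \sum_(z <- itv P x y) c x z * e z y a b.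

(* S_v, in coordinates: s <-> sum_{y ~ v} s(y) e_{v,y} *)
Definition Sv (v : X) := {ffun clsT v -> k^o}.
(* S'_v, in coordinates: b <-> sum_{y ~ v} b(y) e_{y,v} *)
Definition S'v (v : X) := {ffun clsT v -> k^o}.

(* left C-dual-action on S_v: coordinate of e_{v,w} in c* -> s *)
Definition lact_S (v : X) (c : dualC) (s : Sv v) : Sv v :=
  [ffun w : clsT v => \sum_(y : clsT v) s y * lact c v (val y) v (val w)].

(* right C-dual-action on S'_v: coordinate of e_{w,v} in b <- c* *)
Definition ract_S' (v : X) (c : dualC) (b : S'v v) : S'v v :=
  [ffun w : clsT v => \sum_(y : clsT v) b y * ract c (val y) v (val w) v].

Definition Svdual (v : X) := 'Hom(Sv v, k^o).

Definition ract_dual (v : X) (c : dualC) (f : Svdual v) : Svdual v :=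
  (f \o linfun (lact_S c))%VF.

End Incidence.

(* Both S_v and S'_v have bases indexed by the ~-class of v, and on the basis
   vectors c* acts through the single matrix (c*(e_{w,y}))_{w,y ~ v}: from the
   left on S_v and by its transpose from the right on S'_v, because for w ~ y ~ v
   the only term of the coproduct of e_{v,y} (resp. e_{y,v}) hitting the basis of
   S_v (resp. S'_v) at w is e_{v,w} (x) e_{w,y} (resp. e_{y,w} (x) e_{w,v}).
   Dualizing transposes the matrix, so the coordinates of a functional in the
   dual basis give the isomorphism S_v^* -> S'_v. *)
From HB Require Import structures.
From mathcomp Require Import all_boot all_order all_algebra.
Local Open Scope ring_scope.
Import GRing.Theory.

Lemma sum_mul_eq_uniq (k : fieldType) (X : eqType) (r : seq X) (w : X)
    (F : X -> k) :
  uniq r -> w \in r -> \sum_(z <- r) F z * (w == z)%:R = F w.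
Proof.
move=> r_uniq w_r; rewrite (bigD1_seq w) //= eqxx mulr1 big1 ?addr0 //.
by move=> z; rewrite eq_sym => /negbTE->; rewrite mulr0.
Qed.

Section FfunDual.
Variables (k : fieldType) (I : finType).
Local Notation V := {ffun I -> k^o}.

Definition ffun_delta (i : I) : V := [ffun j => (j == i)%:R].

Lemma sum_mul_delta (s : I -> k) (i : I) :
  \sum_j s j * ffun_delta i j = s i.
Proof.
rewrite (bigD1 i) //= ffunE eqxx mulr1 big1 ?addr0 //.
by move=> j /negbTE ji; rewrite ffunE ji mulr0.
Qed.

Lemma ffun_sum_delta (s : V) : s = \sum_i s i *: ffun_delta i.
Proof.
apply/ffunP => w; rewrite sum_ffunE -(sum_mul_delta s w).
by apply: eq_bigr => i _; rewrite !ffunE eq_sym.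
Qed.

Lemma hom_ffun_delta (f : 'Hom(V, k^o)) (s : V) :
  f s = \sum_i s i * f (ffun_delta i).
Proof.
rewrite {1}(ffun_sum_delta s) linear_sum.
by apply: eq_bigr => i _; rewrite linearZ.
Qed.

Definition hom_coord (f : 'Hom(V, k^o)) : V := [ffun i => f (ffun_delta i)].

Definition ffun_pairing (b s : V) : k^o := \sum_i s i * b i.

Lemma ffun_pairing_linear (b : V) : linear (ffun_pairing b).
Proof.
move=> a s t; rewrite /ffun_pairing scaler_sumr -big_split /=.
by apply: eq_bigr => i _; rewrite !ffunE mulrDl -mulrA.
Qed.

HB.instance Definition _ (b : V) :=
  GRing.isLinear.Build k V k^o *:%R (ffun_pairing b) (ffun_pairing_linear b).

Lemma hom_coord_linear : linear hom_coord.
Proof. by move=> a f g; apply/ffunP => i; rewrite !ffunE add_lfunE scale_lfunE. Qed.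

Lemma hom_coord_bij : bijective hom_coord.
Proof.
exists (fun b => linfun (ffun_pairing b)) => [f | b].
  apply/lfunP => s; rewrite lfunE /= hom_ffun_delta.
  by apply: eq_bigr => i _; rewrite ffunE.
apply/ffunP => i; rewrite ffunE lfunE /= -[RHS]sum_mul_delta.
by apply: eq_bigr => j _; rewrite mulrC.
Qed.

Lemma hom_coord_comp (g : {linear V -> V}) (A : I -> I -> k) :
    (forall s w, g s w = \sum_y s y * A w y) ->
  forall (f : 'Hom(V, k^o)) w,
    hom_coord (f \o linfun g)%VF w = \sum_y hom_coord f y * A y w.
Proof.
move=> gE f w; rewrite ffunE comp_lfunE lfunE /= hom_ffun_delta.
apply: eq_bigr => y _; rewrite ffunE mulrC gE.
by under eq_bigr do rewrite mulrC; rewrite sum_mul_delta.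
Qed.

End FfunDual.

Section SimpleComodules.
Variables (k : fieldType) (X : choiceType) (P : lfpreorder X) (v : X).

Lemma cls_itv (w y : clsT P v) :
  val w \in itv P (val y) v /\ val w \in itv P v (val y).
Proof.
have := valP w; have := valP y; rewrite /cls !mem_itv => /andP[yv vy] /andP[wv vw].
by rewrite wv vw (le_trans vy wv) (le_trans vw yv).
Qed.

Lemma lact_SE (c : dualC k X) (s : Sv k P v) :
  lact_S c s = [ffun w : clsT P v => \sum_y s y * c (val w) (val y)].
Proof.
apply/ffunP => w; rewrite !ffunE; apply: eq_bigr => y _; congr (_ * _).
rewrite /lact /e eqxx /= (@sum_mul_eq_uniq _ _ _ _ (fun z => c z (val y))) //.
  exact: itv_uniq.
by case: (cls_itv w y).
Qed.

Lemma ract_S'E (c : dualC k X) (b : S'v k P v) :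
  ract_S' c b = [ffun w : clsT P v => \sum_y b y * c (val y) (val w)].
Proof.
apply/ffunP => w; rewrite !ffunE; apply: eq_bigr => y _; congr (_ * _).
rewrite /ract /e eqxx /=; under eq_bigr do rewrite andbT.
rewrite (@sum_mul_eq_uniq _ _ _ _ (fun z => c (val y) z)) //; first exact: itv_uniq.
by case: (cls_itv w y).
Qed.

Lemma lact_S_linear (c : dualC k X) : linear (@lact_S k X P v c).
Proof.
move=> a s t; rewrite !lact_SE; apply/ffunP => w.
rewrite !ffunE scaler_sumr -big_split.
by apply: eq_bigr => y _; rewrite !ffunE mulrDl -mulrA.
Qed.

HB.instance Definition _ (c : dualC k X) :=
  GRing.isLinear.Build k (Sv k P v) (Sv k P v) *:%R (@lact_S k X P v c)
    (lact_S_linear c).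

End SimpleComodules.

Theorem mainTheorem9 (k : fieldType) (X : choiceType) (P : lfpreorder X) (v : X) :
  exists phi : Svdual k P v -> S'v k P v,
    [/\ linear phi, bijective phi &
        forall (c : dualC k X) (f : Svdual k P v),
          phi (ract_dual c f) = ract_S' c (phi f)].
Proof.
exists (@hom_coord k (clsT P v)); split.
- exact: hom_coord_linear.
- exact: hom_coord_bij.
- move=> c f; apply/ffunP => w; rewrite ract_S'E [RHS]ffunE.
  apply: (@hom_coord_comp _ _ (lact_S c) (fun u y => c (val u) (val y))).
  by move=> s u; rewrite /= lact_SE ffunE.
Qed.
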